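(* Let $m$ be a non-zero integer and $n$ any integer. Then \[ 25\sum_{k = 1}^n F_{mk}^{\,4} = \frac{F_{2mn+m}\left(L_{2mn + m} + 4( - 1)^{mn - 1} L_m \right)}{F_{2m}} + 6n+3\,. \]
   Context: $F_i$ and $L_i$ denote the Fibonacci and Lucas numbers, defined for all $i\in\mathbb{Z}$ by $F_i=F_{i-1}+F_{i-2}$, $F_0=0$, $F_1=1$, and $L_i=L_{i-1}+L_{i-2}$, $L_0=2$, $L_1=1$; equivalently $F_{-i}=(-1)^{i-1}F_i$ and $L_{-i}=(-1)^iL_i$. Summation convention for an arbitrary integer upper limit: $\sum_{k=a}^{a-1} f(k)=0$, and for $n<a-1$, $\sum_{k=a}^{n} f(k) = -\sum_{k=n+1}^{a-1} f(k)$. *)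

From mathcomp Require Import all_boot all_order all_algebra.
Set Implicit Arguments. Unset Strict Implicit. Unset Printing Implicit Defensive.
Import Order.TTheory GRing.Theory Num.Theory.
Local Open Scope ring_scope.

Fixpoint fibn (n : nat) : int :=
  match n with
  | 0%N => 0
  | 1%N => 1
  | (k.+1 as k').+1 => fibn k' + fibn k
  end.

Fixpoint lucn (n : nat) : int :=
  match n with
  | 0%N => 2
  | 1%N => 1
  | (k.+1 as k').+1 => lucn k' + lucn k
  end.

(* Extension to all integer indices:
   F_{-i} = (-1)^(i-1) F_i,  L_{-i} = (-1)^i L_i.
   Negz j denotes -(j+1). *)
Definition F (i : int) : int :=
  match i with
  | Posz n => fibn n
  | Negz j => (-1) ^+ j * fibn j.+1
  end.

Definition L (i : int) : int :=
  match i with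
  | Posz n => lucn n
  | Negz j => (-1) ^+ j.+1 * lucn j.+1
  end.

(* Summation sum_{k=a}^{n} f k for arbitrary integer upper limit n, with the
   convention sum_{k=a}^{a-1} = 0 and, for n < a-1,
   sum_{k=a}^{n} f k = - sum_{k=n+1}^{a-1} f k. *)
Definition zsum (R : zmodType) (a n : int) (f : int -> R) : R :=
  if a - 1 <= n then \sum_(i < absz (n - a + 1)%R) f (a + Posz i)%R
  else - \sum_(i < absz (a - 1 - n)%R) f (n + 1 + Posz i)%R.

From mathcomp Require Import all_boot all_order all_algebra.
From mathcomp Require Import ring zify.
Import Order.TTheory GRing.Theory Num.Theory.
Local Open Scope ring_scope.

(* The addition formulas 2 F_(a+b) = F_a L_b + L_a F_b and
   2 L_(a+b) = L_a L_b + 5 F_a F_b (both sides satisfy the Fibonacci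
   recurrence in a) give Cassini's identity L_a^2 - 5 F_a^2 = 4 (-1)^a and
   then 25 F_k^4 = L_(4k) - 4 (-1)^k L_(2k) + 6.  Writing the right-hand side
   as G(n) / F_(2m) + 6n + 3, the identity F_(a+b) - (-1)^b F_(a-b) = F_b L_a
   yields G(n+1) - G(n) = F_(2m) (25 F_(m(n+1))^4 - 6), so both sides of the
   theorem have the same increments in n and vanish at n = 0. *)

Section IntInduction.
Variable V : zmodType.

Lemma int_telescope (u v : int -> V) :
  (forall n, u (n + 1) - u n = v (n + 1) - v n) -> u 0 = v 0 ->
  forall n, u n = v n.
Proof.
move=> duv uv0.
suff eq0 n : u n - v n = 0 by move=> n; apply: subr0_eq; exact: eq0.
have step k : u (k + 1) - v (k + 1) = u k - v k.
  apply: subr0_eq; rewrite opprD opprK addrACA duv.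
  by rewrite [- v (k + 1) + _]addrC addrA subrK subrr.
elim/int_rect: n => [|n IH|n IH]; first by rewrite uv0 subrr.
  by rewrite -addn1 PoszD step.
by rewrite -IH -step; congr (u _ - v _); lia.
Qed.

Definition fib_recurrent (u : int -> V) :=
  forall i, u (i + 2) = u (i + 1) + u i.

Lemma fib_recurrent_eq (u v : int -> V) :
  fib_recurrent u -> fib_recurrent v -> u 0 = v 0 -> u 1 = v 1 -> u =1 v.
Proof.
move=> ru rv uv0 uv1; pose w i := u i - v i.
have rw i : w (i + 2) = w (i + 1) + w i by rewrite /w ru rv addrACA opprD.
suff w0 i : w i = 0 /\ w (i + 1) = 0.
  by move=> i; apply: subr0_eq; exact: (w0 i).1.
elim/int_rect: i => [|n [IHn IHn1]|n [IHn IHn1]].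
- by rewrite /w uv0 uv1 !subrr.
- by rewrite -addn1 PoszD; split => //; rewrite -addrA rw IHn1 IHn addr0.
- have e : - (n.+1%:Z) + 1 = - n%:Z by lia.
  rewrite e; split => //.
  have := rw (- n.+1%:Z).
  rewrite e (_ : - (n.+1%:Z) + 2 = - n%:Z + 1); last by lia.
  by rewrite IHn IHn1 add0r => /esym.
Qed.

End IntInduction.

Arguments fib_recurrent {V} u.

Lemma zsum_empty (V : zmodType) (a n : int) (g : int -> V) :
  n + 1 = a -> zsum a n g = 0.
Proof.
by move=> <-; rewrite /zsum addrK lexx (_ : absz _ = 0%N) ?big_ord0 //; lia.
Qed.

Lemma zsumSr (V : zmodType) (a n : int) (g : int -> V) :
  zsum a (n + 1) g = zsum a n g + g (n + 1).
Proof.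
rewrite /zsum; case: (ltrgtP (a - 1) n) => [lt_n|gt_n|<-].
- rewrite ifT; last by lia.
  rewrite (_ : absz _ = (absz (n - a + 1)).+1); last by lia.
  by rewrite big_ord_recr /=; congr (_ + g _); lia.
- have [->|ne_n] := eqVneq n (a - 2).
  + rewrite ifT; last by lia.
    rewrite (_ : absz (_ - a + 1)%R = 0%N) ?big_ord0; last by lia.
    by rewrite (_ : absz _ = 1%N) ?big_ord1 ?addr0 ?addNr //; lia.
  rewrite ifF; last by lia.
  rewrite (_ : absz (a - 1 - n)%R = (absz (a - 1 - (n + 1))%R).+1); last by lia.
  rewrite big_ord_recl addr0 [- (g _ + _)]opprD [RHS]addrAC addNr add0r.
  congr (- _).
  by apply: eq_bigr => i _; rewrite lift0; congr g; lia.
- rewrite ifT; last by lia.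
  rewrite (_ : absz (a - 1 - a + 1)%R = 0%N) ?big_ord0 ?add0r; last by lia.
  by rewrite (_ : absz _ = 1%N) ?big_ord1 ?addr0 ?subrK //; lia.
Qed.

Lemma F_rec : fib_recurrent F.
Proof.
case=> [n|[|[|j]]]; [|by []|by []|].
  have -> : n%:Z + 2 = n.+2 by lia.
  by have -> : n%:Z + 1 = n.+1 by lia.
have -> : Negz j.+2 + 2 = Negz j by lia.
have -> : Negz j.+2 + 1 = Negz j.+1 by lia.
by rewrite /F /= !exprS; ring.
Qed.

Lemma L_rec : fib_recurrent L.
Proof.
case=> [n|[|[|j]]]; [|by []|by []|].
  have -> : n%:Z + 2 = n.+2 by lia.
  by have -> : n%:Z + 1 = n.+1 by lia.
have -> : Negz j.+2 + 2 = Negz j by lia.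
have -> : Negz j.+2 + 1 = Negz j.+1 by lia.
by rewrite /L /= !exprS; ring.
Qed.

Lemma signzD (a b : int) : (-1) ^ (a + b) = (-1) ^ a * (-1) ^ b :> int.
Proof. exact: (exprzDr (unitrN1 _)). Qed.

Lemma signzMK (a : int) : (-1) ^ a * (-1) ^ a = 1 :> int.
Proof.
rewrite -signzD (_ : a + a = 2 * a); last by ring.
by rewrite -exprz_exp (_ : (-1) ^ 2 = 1 :> int) // exp1rz.
Qed.

Lemma signzN (a : int) : (-1) ^ (- a) = (-1) ^ a :> int.
Proof. by rewrite -exprz_inv invrN1. Qed.

Lemma FN (a : int) : F (- a) = - (-1) ^ a * F a.
Proof.
case: a => [[|n]|j]; first by rewrite mulr0.
  by rewrite -NegzE /F /exprz exprS; ring.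
rewrite [in LHS]NegzE opprK [in (-1) ^ _]NegzE signzN /F /exprz exprS.
by rewrite mulN1r opprK signrMK.
Qed.

Lemma LN (a : int) : L (- a) = (-1) ^ a * L a.
Proof.
case: a => [[|n]|j]; first by rewrite mul1r.
  by rewrite -NegzE.
by rewrite [in LHS]NegzE opprK [in (-1) ^ _]NegzE signzN /L /exprz signrMK.
Qed.

Lemma L_fib (i : int) : L i = 2 * F (i + 1) - F i.
Proof.
move: i; apply: fib_recurrent_eq L_rec _ _ _ => [i||] //.
by rewrite (addrAC i 2 1) !F_rec; ring.
Qed.

Lemma FD (a b : int) : 2 * F (a + b) = F a * L b + L a * F b.
Proof.
move: a; apply: fib_recurrent_eq => [i|i||].
- by rewrite !(addrAC _ _ b) F_rec mulrDr.
- by rewrite F_rec L_rec; ring.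
- by rewrite add0r /=; ring.
- by rewrite L_fib addrC /=; ring.
Qed.

Lemma LD (a b : int) : 2 * L (a + b) = L a * L b + 5 * F a * F b.
Proof.
move: a; apply: fib_recurrent_eq => [i|i||].
- by rewrite !(addrAC _ _ b) L_rec mulrDr.
- by rewrite F_rec L_rec; ring.
- by rewrite add0r /=; ring.
- by rewrite !L_fib (addrC 1 b) -addrA F_rec /=; ring.
Qed.

Lemma F_double (a : int) : F (2 * a) = F a * L a.
Proof.
have -> : 2 * a = a + a by ring.
by apply: (@mulfI _ 2) => //; rewrite FD; ring.
Qed.

Lemma L_sqr (a : int) : L a ^+ 2 = 5 * F a ^+ 2 + 4 * (-1) ^ a.
Proof.
have h4 : 4 = (-1) ^ a * (L a ^+ 2 - 5 * F a ^+ 2).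
  by have := LD a (- a); rewrite subrr LN FN (_ : 2 * L 0 = 4) // => ->; ring.
have {}h4 : (-1) ^ a * 4 = L a ^+ 2 - 5 * F a ^+ 2.
  by rewrite h4 mulrA signzMK mul1r.
by rewrite (mulrC 4) h4; ring.
Qed.

Lemma L_double (a : int) : L (2 * a) = L a ^+ 2 - 2 * (-1) ^ a.
Proof.
have -> : 2 * a = a + a by ring.
by apply: (@mulfI _ 2) => //; rewrite LD -expr2 L_sqr; ring.
Qed.

Lemma signz_double (a : int) : (-1) ^ (2 * a) = 1 :> int.
Proof. by rewrite (_ : 2 * a = a + a) ?signzD ?signzMK //; ring. Qed.

Lemma F_pow4 (k : int) :
  25 * F k ^+ 4 = L (4 * k) - 4 * (-1) ^ k * L (2 * k) + 6.
Proof.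
have h5 : 5 * F k ^+ 2 = L (2 * k) - 2 * (-1) ^ k.
  by rewrite L_double L_sqr; ring.
have -> : 25 * F k ^+ 4 = (5 * F k ^+ 2) ^+ 2 by ring.
rewrite h5 sqrrB exprMn [((-1) ^ k) ^+ 2]expr2 signzMK.
by rewrite (_ : 4 * k = 2 * (2 * k)) ?L_double ?signz_double; ring.
Qed.

Lemma F_addsub (a b : int) : F (a + b) - (-1) ^ b * F (a - b) = F b * L a.
Proof.
set s := (-1) ^ b; have ss : s * s = 1 := signzMK b.
apply: (@mulfI _ 2) => //.
have -> : 2 * (F (a + b) - s * F (a - b)) = 2 * F (a + b) - s * (2 * F (a - b)).
  by ring.
rewrite !FD LN FN -/s.
have -> : F a * L b + L a * F b - s * (F a * (s * L b) + L a * (- s * F b)) =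
          F a * L b * (1 - s * s) + L a * F b * (1 + s * s) by ring.
by rewrite ss; ring.
Qed.

Lemma fibn_gt0 (n : nat) : 0 < fibn n.+1.
Proof.
suff : (0 <= fibn n) && (0 < fibn n.+1) by case/andP.
elim: n => // n /andP [ge0 gt0].
have -> : fibn n.+2 = fibn n.+1 + fibn n by [].
lia.
Qed.

Lemma F_eq0 (a : int) : (F a == 0) = (a == 0).
Proof.
case: a => [[|n]|j] //; first by rewrite /F gt_eqF ?fibn_gt0.
by rewrite /F mulf_eq0 signr_eq0 gt_eqF ?fibn_gt0.
Qed.

Definition fourth_sum_num (m n : int) : int :=
  F (2 * m * n + m) * (L (2 * m * n + m) + 4 * (-1) ^ (m * n - 1) * L m).

Lemma fourth_sum_num0 (m : int) : fourth_sum_num m 0 = - 3 * F (2 * m).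
Proof.
rewrite /fourth_sum_num !mulr0 add0r sub0r F_double.
by rewrite (_ : (-1) ^ (-1) = -1 :> int) //; ring.
Qed.

Lemma fourth_sum_numSr (m n : int) :
  fourth_sum_num m (n + 1) - fourth_sum_num m n
  = F (2 * m) * (25 * F (m * (n + 1)) ^+ 4 - 6).
Proof.
rewrite /fourth_sum_num; set k := m * (n + 1).
have -> : 2 * m * (n + 1) + m = 2 * k + m by rewrite /k; ring.
have -> : 2 * m * n + m = 2 * k - m by rewrite /k; ring.
have -> : m * n - 1 = k - m - 1 by rewrite /k; ring.
rewrite !signzD signzN (_ : (-1) ^ (-1) = -1 :> int) //.
have FLsub : F (2 * k + m) * L (2 * k + m) - F (2 * k - m) * L (2 * k - m)
             = F (2 * m) * L (4 * k).
  rewrite -!F_double -F_addsub signz_double mul1r.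
  by congr (F _ - F _); ring.
have Fsub : F (2 * k + m) - (-1) ^ m * F (2 * k - m) = F m * L (2 * k).
  exact: F_addsub.
rewrite F_pow4.
set Fp := F (2 * k + m); set Fm := F (2 * k - m).
have -> : Fp * (L (2 * k + m) + 4 * ((-1) ^ k * -1) * L m)
          - Fm * (L (2 * k - m) + 4 * ((-1) ^ k * (-1) ^ m * -1) * L m)
        = (Fp * L (2 * k + m) - Fm * L (2 * k - m))
          - 4 * (-1) ^ k * L m * (Fp - (-1) ^ m * Fm) by ring.
by rewrite FLsub Fsub F_double; ring.
Qed.

Theorem theorem1 (m n : int) (hm : m != 0) :
  25 * zsum 1 n (fun k : int => ((F (m * k))%:~R : rat) ^+ 4)
  = (F (2 * m * n + m))%:~R
      * ((L (2 * m * n + m))%:~R + 4 * (-1) ^ (m * n - 1) * (L m)%:~R)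
      / (F (2 * m))%:~R
    + (6 * n + 3)%:~R.
Proof.
set c : rat := (F (2 * m))%:~R.
have c_neq0 : c != 0 by rewrite intr_eq0 F_eq0 mulf_eq0 negb_or hm.
have numE k : (fourth_sum_num m k)%:~R = (F (2 * m * k + m))%:~R
    * ((L (2 * m * k + m))%:~R + 4 * (-1) ^ (m * k - 1) * (L m)%:~R) :> rat.
  rewrite /fourth_sum_num !(rmorphM, rmorphD).
  by rewrite (rmorphXz _ _ (unitrN1 _)) rmorphN1.
rewrite -numE; move: n; apply: int_telescope => [n|].
  rewrite zsumSr mulrDr addrAC subrr add0r.
  rewrite -(subrK (fourth_sum_num m n) (fourth_sum_num m (n + 1))).
  by rewrite intrD fourth_sum_numSr intrM -/c; field.
rewrite zsum_empty // fourth_sum_num0 intrM -/c.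
by field.
Qed.
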